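(* Let $n,k,r,\ell$ be positive integers. Then \[S_{\geq \ell}(n,k,r)=(k+r-1)S_{\geq \ell}(n-1,k,r)+\binom{n-1}{\ell-1}\Big((k-1)S_{\geq \ell}(n-\ell,k-1,r)+S_{\geq \ell}(n-\ell,k,r-1)\Big),\] where terms with $n-\ell<0$ (for which $\binom{n-1}{\ell-1}=0$) are $0$ and the term $(k-1)S_{\geq \ell}(n-\ell,k-1,r)$ is $0$ when $k=1$.
   Context: For integers $N\ge 0$, $k\ge1$, $r\ge 0$, $\ell\ge1$, $S_{\geq \ell}(N,k,r)$ is the number of ways to partition $[N]=\{1,\dots,N\}$ into $r+k-1$ non-empty blocks, each of size at least $\ell$, where $r$ of the blocks receive the label $1$ (blocks with label $1$ are indistinguishable among themselves) and the remaining $k-1$ blocks receive the distinct labels $2,3,\dots,k$. *)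

From mathcomp Require Import all_boot.
Set Implicit Arguments. Unset Strict Implicit. Unset Printing Implicit Defensive.

(* A labeled partition of [N] = 'I_N counted by S_{>= l}(N,k,r):
   a set partition Q of [N] into r+k-1 nonempty blocks, each of size >= l,
   together with an injective assignment g of the k-1 distinct labels
   2,...,k (indexed by 'I_(k-1)) to blocks of Q; the remaining r blocks
   carry the label 1 (indistinguishable among themselves). *)
Definition is_labeled_partition (l N k r : nat)
  (QG : {set {set 'I_N}} * {ffun 'I_(k.-1) -> {set 'I_N}}) : bool :=
  [&& partition QG.1 [set: 'I_N],
      #|QG.1| == r + k - 1,
      [forall B in QG.1, l <= #|B|],
      injectiveb QG.2 &
      [forall i, QG.2 i \in QG.1]].

Arguments is_labeled_partition : clear implicits.

Definition Sge (l N k r : nat) : nat :=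
  #|[set QG : {set {set 'I_N}} * {ffun 'I_(k.-1) -> {set 'I_N}} | is_labeled_partition l N k r QG]|.

From mathcomp Require Import all_boot zify.
Set Implicit Arguments. Unset Strict Implicit. Unset Printing Implicit Defensive.

(* A labelled partition counted by S_{>=l}(N,k,r) is a partition of [N] into
   m = r+k-1 blocks of size at least l together with an injection of the k-1
   labels 2..k into its blocks, so S_{>=l}(N,k,r) = p_l(N,m) * m^_(k-1), where
   p_l(N,m) counts the unlabelled partitions and ^_ is the falling factorial.
   Classify these partitions by the block of a point x.  If it has more than l
   elements, deleting x leaves a partition of [N]\{x} with one of its m blocks
   marked.  If it has exactly l elements, it is given by its other l-1
   elements, and deleting it leaves a partition of the remaining N-l points
   into m-1 blocks.  Hence
     p_l(N,m) = m p_l(N-1,m) + C(N-1,l-1) p_l(N-l,m-1),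
   and the theorem follows with m^_(k-1) = (k-1) (m-1)^_(k-2) + (m-1)^_(k-1). *)

Lemma card_in_bij (T T' : finType) (A : {set T}) (B : {set T'})
    (f : T -> T') (g : T' -> T) :
  {in A, forall x, f x \in B} -> {in B, forall y, g y \in A} ->
  {in A, cancel f g} -> {in B, cancel g f} -> #|A| = #|B|.
Proof.
move=> fAB gBA fK gK; apply/eqP; rewrite eqn_leq.
rewrite -[X in X <= _](card_in_imset (can_in_inj fK)).
rewrite -[X in _ && (X <= _)](card_in_imset (can_in_inj gK)).
by rewrite !subset_leq_card //; apply/subsetP => _ /imsetP[z zA ->]; auto.
Qed.

Lemma card_setX_dep (T T' : finType) (p : pred T) (q : T -> pred T') :
  #|[set x : T * T' | p x.1 && q x.1 x.2]| = \sum_(a | p a) #|[set b | q a b]|.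
Proof.
rewrite -sum1_card (eq_bigl (fun x : T * T' => p x.1 && q x.1 x.2)) => [|x]; last first.
  by rewrite inE.
rewrite -(pair_big_dep p q (fun _ _ => 1)); apply: eq_bigr => a _.
by rewrite -sum1_card; apply: eq_bigl => b; rewrite inE.
Qed.

Lemma ffactSn n m : n.+1 ^_ m = m * n ^_ m.-1 + n ^_ m.
Proof.
case: m => [|m] //=; rewrite ffactSS ffactnSr.
have [le_mn | lt_nm] := leqP m n; last by rewrite ffact_small ?muln0.
by rewrite [_ * (n - m)]mulnC -mulnDl; congr (_ * _); lia.
Qed.

Definition lpartition (T : finType) (l m : nat) (P : {set {set T}}) (D : {set T}) : bool :=
  [&& partition P D, #|P| == m & [forall B in P, l <= #|B|]].

Definition lpartitions (T : finType) (l m : nat) (D : {set T}) : {set {set {set T}}} :=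
  [set P | lpartition l m P D].

Lemma lpartition_imset (T T' : finType) (f : T -> T') l m
    (P : {set {set T}}) (D : {set T}) :
  injective f ->
  lpartition l m [set f @: (B : {set T}) | B in P] (f @: D) = lpartition l m P D.
Proof.
move=> injf; rewrite /lpartition imset_partition // card_imset; last exact: imset_inj.
congr [&& _, _ & _]; apply/forall_inP/forall_inP => lP B.
  by move=> BP; rewrite -(card_imset _ injf) lP ?imset_f.
by case/imsetP => B' B'P ->; rewrite card_imset // lP.
Qed.

Lemma card_lpartitions_imset (T T' : finType) (f : T -> T') l m (D : {set T}) :
  injective f -> #|lpartitions l m (f @: D)| = #|lpartitions l m D|.
Proof.
move=> injf.
have preimK Q : partition Q (f @: D) ->
    [set f @: (B : {set T}) | B in [set f @^-1: (B : {set T'}) | B in Q]] = Q.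
  move=> partQ; rewrite -imset_comp -[RHS]imset_id; apply: eq_in_imset => B BQ /=.
  apply/setP => y; apply/imsetP/idP => [[z]|yB]; first by rewrite inE => zB ->.
  have /imsetP[z _ yz] := subsetP (partitionS partQ BQ) y yB.
  by exists z; rewrite ?inE -?yz.
symmetry.
apply: (card_in_bij (f := fun P : {set {set T}} => [set f @: (B : {set T}) | B in P])
          (g := fun Q : {set {set T'}} => [set f @^-1: (B : {set T'}) | B in Q])).
- by move=> P; rewrite !inE lpartition_imset.
- move=> Q; rewrite !inE => lpartQ; rewrite -(lpartition_imset _ _ _ _ injf) preimK //.
  by case/and3P: lpartQ.
- move=> P _; rewrite -imset_comp -[RHS]imset_id; apply: eq_in_imset => B _ /=.
  by apply/setP => y; rewrite !inE mem_imset.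
- by move=> Q; rewrite inE => /and3P[/preimK].
Qed.

Lemma card_lpartitions_ord (T : finType) l m (D : {set T}) :
  #|lpartitions l m D| = #|lpartitions l m [set: 'I_#|D|]|.
Proof.
have -> : D = @enum_val T (mem D) @: [set: 'I_#|D|].
  apply/setP => x; apply/idP/imsetP => [xD | [i _ ->]]; last exact: enum_valP.
  by exists (enum_rank_in xD x); rewrite ?inE ?enum_rankK_in.
rewrite card_lpartitions_imset; last exact: enum_val_inj.
by rewrite card_imset ?cardsT ?card_ord //; exact: enum_val_inj.
Qed.

Lemma eq_card_lpartitions (T T' : finType) l m (D : {set T}) (D' : {set T'}) :
  #|D| = #|D'| -> #|lpartitions l m D| = #|lpartitions l m D'|.
Proof.
by move=> eqDD'; rewrite card_lpartitions_ord [RHS]card_lpartitions_ord eqDD'.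
Qed.

Section LPartitions.

Variables (T : finType) (l : nat).
Hypothesis l_gt0 : 0 < l.
Implicit Types (B C D : {set T}) (P : {set {set T}}).

Lemma lpartition_setU1 m P B D :
    B != set0 -> B \subset D -> l <= #|B| -> lpartition l m P (D :\: B) ->
  B \notin P /\ lpartition l m.+1 (B |: P) D.
Proof.
move=> B0 BD lB /and3P[partP /eqP cardP /forall_inP lP].
have BnP : B \notin P.
  apply: contra B0 => /(partitionS partP)/subsetDP[_].
  by rewrite -setI_eq0 setIid.
split=> //; rewrite /lpartition cardsU1 BnP cardP eqxx /=; apply/andP; split.
  rewrite -[D in partition _ D](setID D B) (setIidPr BD); apply: partitionU1 => //.
  by rewrite disjoint_sym; have /subsetDP[] := subxx (D :\: B).
by apply/forall_inP => C /setU1P[-> | /lP].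
Qed.

Lemma lpartition_setD1 m P B D :
    B \in P -> lpartition l m.+1 P D ->
  [/\ B != set0, B \subset D, l <= #|B| & lpartition l m (P :\ B) (D :\: B)].
Proof.
move=> BP /and3P[partP /eqP cardP /forall_inP lP].
split; [exact: partition_neq0 partP BP | exact: partitionS partP BP | exact: lP |].
rewrite /lpartition partitionD1 //=; apply/andP; split.
  by move: cardP; rewrite (cardsD1 B P) BP add1n => -[->].
by apply/forall_inP => C /setD1P[_ /lP].
Qed.

Lemma lpartition_pblock m P D x :
    x \in D -> lpartition l m.+1 P D ->
  [/\ pblock P x \in P, x \in pblock P x, pblock P x \subset D,
      l <= #|pblock P x|
    & lpartition l m (P :\ pblock P x) ((D :\ x) :\: (pblock P x :\ x))].
Proof.
move=> xD lpartP; have /and3P[partP _ _] := lpartP.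
have xP : x \in cover P by rewrite (cover_partition partP).
have BP := pblock_mem xP; have xB : x \in pblock P x by rewrite mem_pblock.
have [_ BD lB lpartP'] := lpartition_setD1 BP lpartP.
suff -> : (D :\ x) :\: (pblock P x :\ x) = D :\: pblock P x by [].
by rewrite setDDl setD1K.
Qed.

Lemma lpartition_add_pblock m P C D x :
    x \in D -> C \subset D :\ x -> l <= #|C|.+1 ->
    lpartition l m P ((D :\ x) :\: C) ->
  [/\ x \notin C, x |: C \notin P, lpartition l m.+1 ((x |: C) |: P) D
    & pblock ((x |: C) |: P) x = x |: C].
Proof.
move=> xD /subsetD1P[CD xC] lC lpartP.
have B0 : x |: C != set0 by apply/set0Pn; exists x; rewrite setU11.
have BD : x |: C \subset D by rewrite subUset sub1set xD CD.
rewrite setDDl in lpartP.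
have [|BnP lpartP'] := lpartition_setU1 B0 BD _ lpartP; first by rewrite cardsU1 xC.
split=> //; apply: def_pblock; rewrite ?setU11 //.
by case/and3P: lpartP' => /partition_trivIset.
Qed.

Lemma card_lpartitions_marked m D :
  #|[set CP : {set T} * {set {set T}} |
      [&& CP.1 \subset D, l <= #|CP.1| & lpartition l m CP.2 (D :\: CP.1)]]|
  = m.+1 * #|lpartitions l m.+1 D|.
Proof.
have -> : m.+1 * #|lpartitions l m.+1 D| =
    #|[set PB : {set {set T}} * {set T} | lpartition l m.+1 PB.1 D && (PB.2 \in PB.1)]|.
  rewrite (card_setX_dep (lpartition l m.+1 ^~ D) (fun P B => B \in P)).
  rewrite (eq_bigr (fun _ => m.+1)) => [|P /and3P[_ /eqP <- _]].
    by rewrite sum_nat_const mulnC; congr (_ * _); apply: eq_card => P; rewrite inE.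
  by apply: eq_card => B; rewrite inE.
apply: (card_in_bij (f := fun CP => (CP.1 |: CP.2, CP.1))
                    (g := fun PB => (PB.2, PB.1 :\ PB.2))).
- move=> [C P]; rewrite !inE /= => /and3P[CD lC lpartP].
  have C0 : C != set0 by rewrite -card_gt0 (leq_trans l_gt0).
  by have [_ ->] := lpartition_setU1 C0 CD lC lpartP; rewrite eqxx.
- move=> [P B]; rewrite !inE /= => /andP[lpartP BP].
  by case: (lpartition_setD1 BP lpartP) => _ -> -> ->.
- move=> [C P]; rewrite inE /= => /and3P[CD lC lpartP].
  have C0 : C != set0 by rewrite -card_gt0 (leq_trans l_gt0).
  by have [CnP _] := lpartition_setU1 C0 CD lC lpartP; rewrite (setU1K CnP).
- by move=> [P B]; rewrite inE /= => /andP[_ BP]; rewrite (setD1K BP).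
Qed.

Lemma card_lpartitions_pblock m D x (q : pred {set T}) : x \in D ->
  #|lpartitions l m.+1 D :&: [set P | q (pblock P x :\ x)]| =
  #|[set CP : {set T} * {set {set T}} |
      [&& CP.1 \subset D :\ x, l <= #|CP.1|.+1, q CP.1
        & lpartition l m CP.2 ((D :\ x) :\: CP.1)]]|.
Proof.
move=> xD.
apply: (card_in_bij (f := fun P => (pblock P x :\ x, P :\ pblock P x))
                    (g := fun CP => (x |: CP.1) |: CP.2)).
- move=> P; rewrite !inE /= => /andP[lpartP qP].
  have [_ xB BD lB ->] := lpartition_pblock xD lpartP.
  by rewrite (cardsD1 x) xB in lB; rewrite setSD //= qP lB.
- move=> [C P]; rewrite !inE /= => /and4P[CD lC qC lpartP].
  have [xC _ -> ->] := lpartition_add_pblock xD CD lC lpartP.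
  by rewrite setU1K.
- move=> P; rewrite !inE => /andP[lpartP _] /=.
  by have [BP xB _ _ _] := lpartition_pblock xD lpartP; rewrite !setD1K.
- move=> [C P]; rewrite inE /= => /and4P[CD lC _ lpartP].
  by have [xC BnP _ ->] := lpartition_add_pblock xD CD lC lpartP; rewrite !setU1K.
Qed.

Lemma card_lpartitions_big_pblock m D x : x \in D ->
  #|lpartitions l m.+1 D :&: [set P | l <= #|pblock P x :\ x|]| =
  m.+1 * #|lpartitions l m.+1 (D :\ x)|.
Proof.
move=> xD; rewrite (@card_lpartitions_pblock m D x (fun C => l <= #|C|)) //.
rewrite -card_lpartitions_marked; apply: eq_card => -[C P]; rewrite !inE /=.
by case: (boolP (l <= #|C|)) => lC; rewrite ?(leqW lC) /= ?andbF.
Qed.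

Lemma card_lpartitions_small_pblock m D x : x \in D ->
  #|lpartitions l m.+1 D :\: [set P | l <= #|pblock P x :\ x|]| =
  'C(#|D|.-1, l.-1) * #|lpartitions l m [set: 'I_(#|D| - l)]|.
Proof.
move=> xD.
rewrite setDE (eq_card (B := lpartitions l m.+1 D :&:
                             [set P | ~~ (l <= #|pblock P x :\ x|)])); last first.
  by move=> P; rewrite !inE.
rewrite (@card_lpartitions_pblock m D x (fun C => ~~ (l <= #|C|))) //.
rewrite (eq_card (B := [set CP : {set T} * {set {set T}} |
    ((CP.1 \subset D :\ x) && (#|CP.1| == l.-1))
    && lpartition l m CP.2 ((D :\ x) :\: CP.1)])); last first.
  move=> [C P]; rewrite !inE /= -!andbA; congr (_ && _); rewrite andbA; congr (_ && _).
  by apply/andP/eqP => [[]|->]; lia.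
rewrite (card_setX_dep (fun C => (C \subset D :\ x) && (#|C| == l.-1))
                       (fun C P => lpartition l m P ((D :\ x) :\: C))).
rewrite (eq_bigr (fun _ => #|lpartitions l m [set: 'I_(#|D| - l)]|)).
  rewrite sum_nat_const (cardsD1 x D) xD -cards_draws; congr (_ * _).
  by apply: eq_card => C; rewrite !inE.
move=> C /andP[CD /eqP cardC]; apply: eq_card_lpartitions.
rewrite cardsT card_ord cardsD (setIidPr CD) cardC (cardsD1 x D) xD; lia.
Qed.

Lemma card_lpartitions_rec m D x : x \in D ->
  #|lpartitions l m.+1 D| =
    m.+1 * #|lpartitions l m.+1 (D :\ x)|
    + 'C(#|D|.-1, l.-1) * #|lpartitions l m [set: 'I_(#|D| - l)]|.
Proof.
move=> xD; rewrite -(cardsID [set P | l <= #|pblock P x :\ x|]).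
by rewrite card_lpartitions_big_pblock ?card_lpartitions_small_pblock.
Qed.

End LPartitions.

Lemma SgeE l N k r :
  Sge l N k r = #|lpartitions l (r + k - 1) [set: 'I_N]| * (r + k - 1) ^_ k.-1.
Proof.
set m := r + k - 1.
rewrite /Sge (eq_card (B := [set QG : {set {set 'I_N}} * {ffun 'I_k.-1 -> {set 'I_N}} |
    lpartition l m QG.1 [set: 'I_N] && (injectiveb QG.2 && [forall i, QG.2 i \in QG.1])]));
  last by move=> QG; rewrite !inE /is_labeled_partition /lpartition !andbA.
rewrite (card_setX_dep (lpartition l m ^~ [set: 'I_N])
          (fun Q (g : {ffun 'I_k.-1 -> {set 'I_N}}) =>
             injectiveb g && [forall i, g i \in Q])).
rewrite (eq_bigr (fun _ => m ^_ k.-1)) => [|Q /and3P[_ /eqP <- _]].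
  by rewrite sum_nat_const; congr (_ * _); apply: eq_card => Q; rewrite inE.
rewrite -[in RHS](card_ord k.-1) -card_inj_ffuns_on; apply: eq_card => g.
by rewrite !inE andbC; congr (_ && _); apply/forallP/ffun_onP.
Qed.

Theorem mainTheorem9 (n k r l : nat) :
  0 < n -> 0 < k -> 0 < r -> 0 < l ->
  Sge l n k r =
    (k + r - 1) * Sge l n.-1 k r
    + 'C(n.-1, l.-1) * ((k - 1) * Sge l (n - l) k.-1 r + Sge l (n - l) k r.-1).
Proof.
case: n => // n _; case: k => // k _; case: r => // r _ l_gt0.
rewrite !SgeE !addSn !addnS !subn1 /= [k + r]addnC.
rewrite (card_lpartitions_rec l_gt0 (r + k) (in_setT ord0)) cardsT card_ord /=.
rewrite (@eq_card_lpartitions _ _ _ _ ([set: 'I_n.+1] :\ ord0) [set: 'I_n]); last first.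
  by rewrite setTD cardsC1 cardsT !card_ord.
rewrite (ffactSn (r + k) k).
set a := #|lpartitions _ _ [set: 'I_n]|; set b := #|lpartitions _ _ [set: 'I_(n.+1 - l)]|.
nia.
Qed.
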